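(* Let $\mathcal{S}=\{c\in\mathbb{M}_2: 0\le c\le 1,\ \operatorname{trace}(c)=1,\ 0<\det(c)<\tfrac14\}$, and let $a,b\in\mathcal{S}$. Then $a$ is absolutely compatible with $b$ if, and only if, there exists a unitary $u\in\mathbb{M}_2$ such that $$u^*au=\begin{pmatrix} t&\alpha\\ \bar\alpha & 1-t\end{pmatrix},\qquad u^*bu=\begin{pmatrix} s&\beta\\ \bar\beta&1-s\end{pmatrix},$$ where $\beta=-\alpha\ne0$, $s,t\in(0,1)$, $|\alpha|^2<t(1-t)$, and either $s=\frac{|\alpha|^2}{t}$ or $s=1-\frac{|\alpha|^2}{1-t}$.
   Context: $\mathbb{M}_2$ is the algebra of $2\times2$ complex matrices; $\operatorname{trace}$ is the non-normalized trace. For $x\in\mathbb{M}_2$, $|x|=(x^*x)^{1/2}$. Elements $0\le a,b\le 1$ are absolutely compatible if $|a-b|+|1-a-b|=1$. Equivalently, $\mathcal{S}=\left\{\begin{pmatrix} t&\alpha\\ \bar\alpha&1-t\end{pmatrix}: t\in(0,1),\ \alpha\in\mathbb{C},\ |\alpha|^2<t(1-t)\right\}\setminus\{\tfrac12 1\}$. *)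

From mathcomp Require Import all_boot all_order all_algebra.
Set Implicit Arguments. Unset Strict Implicit. Unset Printing Implicit Defensive.
Import Order.TTheory GRing.Theory Num.Theory.
Local Open Scope ring_scope.

(* Complex scalars: any numeric closed field C (e.g. the complex numbers). *)

Definition ctrmx (C : numClosedFieldType) (n : nat) (x : 'M[C]_n) : 'M[C]_n :=
  map_mx Num.conj (x^T).

Definition psdmx (C : numClosedFieldType) (n : nat) (x : 'M[C]_n) : Prop :=
  forall v : 'cV[C]_n, 0 <= ((map_mx Num.conj v)^T *m x *m v) 0 0.

(* p = |x| = (x^* x)^{1/2}, the (unique) positive square root of x^* x *)
Definition is_absmx (C : numClosedFieldType) (n : nat) (x p : 'M[C]_n) : Prop :=
  psdmx p /\ p *m p = ctrmx x *m x.

Definition abs_compatible (C : numClosedFieldType) (n : nat) (a b : 'M[C]_n) : Prop :=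
  exists p q : 'M[C]_n,
    [/\ is_absmx (a - b) p, is_absmx (1%:M - a - b) q & p + q = 1%:M].

Definition is_unitary2 (C : numClosedFieldType) (n : nat) (u : 'M[C]_n) : Prop :=
  ctrmx u *m u = 1%:M.

Definition in_S (C : numClosedFieldType) (c : 'M[C]_2) : Prop :=
  [/\ psdmx c, psdmx (1%:M - c), \tr c = 1 & 0 < \det c < 4^-1].

Definition mx2 (C : numClosedFieldType) (x00 x01 x10 x11 : C) : 'M[C]_2 :=
  \matrix_(i < 2, j < 2)
    if i == 0 then (if j == 0 then x00 else x01) else (if j == 0 then x10 else x11).

From mathcomp Require Import all_boot all_order all_algebra.
From mathcomp Require Import ring.
Import Order.TTheory GRing.Theory Num.Theory.
Set Implicit Arguments.
Unset Strict Implicit.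
Unset Printing Implicit Defensive.

Local Open Scope ring_scope.

(* A unitary u putting a + b in (lower) triangular Schur form makes the
   off-diagonal entries of the Hermitian matrices u^* a u and u^* b u
   opposite, say alpha and -alpha.  For such a pair both (a - b)^2 and
   (1 - a - b)^2 are scalar, so |a - b| + |1 - a - b| = 1 forces
   |a - b| = c and |1 - a - b| = 1 - c to be scalar as well; the equations
   c^2 = (t - s)^2 + 4|alpha|^2 and (1 - c)^2 = (t + s - 1)^2 then say
   exactly that t s = |alpha|^2 or (1 - t)(1 - s) = |alpha|^2. *)

Section Congruence.
Variables (C : numClosedFieldType) (n : nat).
Implicit Types a b p u x : 'M[C]_n.

Lemma ctrmx_mul a b : ctrmx (a *m b) = ctrmx b *m ctrmx a.
Proof. by rewrite /ctrmx trmx_mul map_mxM. Qed.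

Lemma ctrmxK : involutive (@ctrmx C n).
Proof. by move=> a; apply/matrixP => i j; rewrite !mxE conjCK. Qed.

Lemma unitaryC u : is_unitary2 u -> u *m ctrmx u = 1%:M.
Proof. exact: mulmx1C. Qed.

Lemma unitary_ctrmx u : is_unitary2 u -> is_unitary2 (ctrmx u).
Proof. by move=> Hu; rewrite /is_unitary2 ctrmxK unitaryC. Qed.

Lemma unitary_of_unitarymx u : u \is unitarymx -> is_unitary2 (ctrmx u).
Proof. by move=> /unitarymxP Hu; rewrite /is_unitary2 ctrmxK; exact: Hu. Qed.

Lemma psdmx_congr u a : psdmx a -> psdmx (ctrmx u *m a *m u).
Proof.
move=> Ha v; have := Ha (u *m v).
by rewrite map_trmx trmx_mul map_mxM !mulmxA map_trmx.
Qed.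

Lemma unitary_congrM u a b : is_unitary2 u ->
  ctrmx u *m (a *m b) *m u = (ctrmx u *m a *m u) *m (ctrmx u *m b *m u).
Proof.
by move=> Hu; rewrite !mulmxA -[_ *m u *m ctrmx u]mulmxA unitaryC ?mulmx1.
Qed.

Lemma unitary_congrB u a b :
  ctrmx u *m (a - b) *m u = ctrmx u *m a *m u - ctrmx u *m b *m u.
Proof. by rewrite mulmxBr mulmxBl. Qed.

Lemma unitary_congr1 u : is_unitary2 u -> ctrmx u *m 1%:M *m u = 1%:M.
Proof. by rewrite mulmx1. Qed.

Lemma ctrmx_congr u a : ctrmx (ctrmx u *m a *m u) = ctrmx u *m ctrmx a *m u.
Proof. by rewrite !ctrmx_mul ctrmxK mulmxA. Qed.

Lemma is_absmx_congr u x p : is_unitary2 u -> is_absmx x p ->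
  is_absmx (ctrmx u *m x *m u) (ctrmx u *m p *m u).
Proof.
move=> Hu [Pp Ep]; split; first exact: psdmx_congr.
by rewrite -unitary_congrM // Ep unitary_congrM // ctrmx_congr.
Qed.

Lemma abs_compatible_congr u a b : is_unitary2 u -> abs_compatible a b ->
  abs_compatible (ctrmx u *m a *m u) (ctrmx u *m b *m u).
Proof.
move=> Hu [p [q [Hp Hq Epq]]].
exists (ctrmx u *m p *m u), (ctrmx u *m q *m u); split.
- by rewrite -unitary_congrB; apply: is_absmx_congr.
- by rewrite -(unitary_congr1 Hu) -!unitary_congrB; apply: is_absmx_congr.
- by rewrite -mulmxDl -mulmxDr Epq unitary_congr1.
Qed.

Lemma abs_compatible_unitary u a b : is_unitary2 u ->
  abs_compatible (ctrmx u *m a *m u) (ctrmx u *m b *m u) <-> abs_compatible a b.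
Proof.
move=> Hu; split; last exact: abs_compatible_congr.
have back c : ctrmx (ctrmx u) *m (ctrmx u *m c *m u) *m ctrmx u = c.
  by rewrite ctrmxK !mulmxA unitaryC // mul1mx -mulmxA unitaryC // mulmx1.
by move/(abs_compatible_congr (unitary_ctrmx Hu)); rewrite !back.
Qed.

End Congruence.

Lemma Schur_congr (C : numClosedFieldType) n (A : 'M[C]_n.+1) :
  exists2 u : 'M[C]_n.+1, is_unitary2 u & is_trig_mx (ctrmx u *m A *m u).
Proof.
have [P PU trig] := Schur A (ltn0Sn n).
exists (ctrmx P); first exact: unitary_of_unitarymx.
by rewrite ctrmxK; move: trig; rewrite /similar_to /conjmx pinvmx_unitary.
Qed.

Lemma complement_sqr_scalar (R : numFieldType) n (p q : 'M[R]_n) (x y : R) :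
  p + q = 1%:M -> p *m p = x%:M -> q *m q = y%:M -> p = ((1 + x - y) / 2)%:M.
Proof.
move=> Epq Ep Eq.
have Hq : q = 1%:M - p by rewrite -Epq addrC addKr.
have Hp2 : (1 + x - y)%:M = 2%:R *: p.
  rewrite scaler_nat !raddfB raddfD /= -Ep -Eq Hq.
  rewrite mulmxBl !mulmxBr !mul1mx !mulmx1.
  by apply/matrixP => i j; rewrite !mxE; ring.
by rewrite mulrC -scale_scalar_mx Hp2 scalerA mulVf ?pnatr_eq0 ?scale1r.
Qed.

Section ScalarRoots.
Variable C : numClosedFieldType.

Lemma psdmx_scalar n (c : C) : psdmx (c%:M : 'M[C]_n.+1) <-> 0 <= c.
Proof.
have quad (v : 'cV[C]_n.+1) :
    ((map_mx Num.conj v)^T *m c%:M *m v) 0 0 = c * \sum_i `|v i 0| ^+ 2.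
  rewrite mul_mx_scalar -scalemxAl mxE; congr (_ * _).
  by rewrite mxE; apply: eq_bigr => i _; rewrite !mxE normCK mulrC.
split => [|c0 v]; last first.
  by rewrite quad mulr_ge0 // sumr_ge0 // => i _; rewrite exprn_ge0.
move/(_ (const_mx 1)); rewrite quad (eq_bigr (fun=> 1)) => [|i _].
  by rewrite sumr_const card_ord pmulr_lge0 // ltr0n.
by rewrite mxE normr1 expr1n.
Qed.

Lemma abs_compatible_scalar n (a b : 'M[C]_n.+1) (x y : C) :
  ctrmx (a - b) *m (a - b) = x%:M ->
  ctrmx (1%:M - a - b) *m (1%:M - a - b) = y%:M ->
  abs_compatible a b <->
  exists c : C, [/\ 0 <= c, 0 <= 1 - c, c ^+ 2 = x & (1 - c) ^+ 2 = y].
Proof.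
have scalar_inj (d e : C) : d%:M = e%:M :> 'M[C]_n.+1 -> d = e.
  by move/matrixP/(_ 0 0); rewrite !mxE eqxx !mulr1n.
move=> Ex Ey; split.
- move=> [p [q [[Pp Ep] [Pq Eq] Epq]]]; rewrite Ex in Ep; rewrite Ey in Eq.
  have Hp := complement_sqr_scalar Epq Ep Eq.
  set c := (1 + x - y) / 2 in Hp.
  have Hq : q = (1 - c)%:M by rewrite -[q](addKr p) Epq Hp addrC raddfB.
  exists c; split.
  + by rewrite -(psdmx_scalar n) -Hp.
  + by rewrite -(psdmx_scalar n) -Hq.
  + by apply: scalar_inj; rewrite -Ep Hp -scalar_mxM expr2.
  + by apply: scalar_inj; rewrite -Eq Hq -scalar_mxM expr2.
- move=> [c [c0 c1 Ec Ec']]; exists c%:M, (1 - c)%:M; split.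
  + by split; [apply/psdmx_scalar | rewrite Ex -Ec expr2 scalar_mxM].
  + by split; [apply/psdmx_scalar | rewrite Ey -Ec' expr2 scalar_mxM].
  + by rewrite -raddfD addrC subrK.
Qed.

End ScalarRoots.

Lemma scalar_root_condition (R : numFieldType) (t s m : R) :
  0 < t -> 0 < 1 - t -> 0 <= m -> m <= t * (1 - t) ->
  (exists c : R, [/\ 0 <= c, 0 <= 1 - c, c ^+ 2 = (t - s) ^+ 2 + m *+ 4
                   & (1 - c) ^+ 2 = (t + s - 1) ^+ 2])
  <-> s = m / t \/ s = 1 - m / (1 - t).
Proof.
move=> t0 t1 m0 mle; have tn0 := lt0r_neq0 t0; have t1n0 := lt0r_neq0 t1.
split.
- move=> [c [_ _ Ec /eqP]]; rewrite eqf_sqr => /orP[] /eqP Hc;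
    rewrite -[c](subKr 1) Hc in Ec.
  + have : ((1 - t) * (1 - s) - m) *+ 4 = 0.
      by rewrite -(subrr ((t - s) ^+ 2 + m *+ 4)) -{1}Ec; ring.
    move/eqP; rewrite mulrn_eq0 /= subr_eq0 => /eqP <-.
    by right; field.
  + have : (t * s - m) *+ 4 = 0.
      by rewrite -(subrr ((t - s) ^+ 2 + m *+ 4)) -{1}Ec; ring.
    move/eqP; rewrite mulrn_eq0 /= subr_eq0 => /eqP <-.
    by left; field.
- case=> ->.
  + exists (t + m / t); split.
    * exact: addr_ge0 (ltW t0) (divr_ge0 m0 (ltW t0)).
    * by rewrite opprD addrA subr_ge0 ler_pdivrMr // mulrC.
    * by field.
    * by ring.
  + exists (1 - t + m / (1 - t)); split.
    * exact: addr_ge0 (ltW t1) (divr_ge0 m0 (ltW t1)).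
    * by rewrite opprD addrA subKr subr_ge0 ler_pdivrMr.
    * by field.
    * by ring.
Qed.

Section TwoByTwo.
Variable C : numClosedFieldType.
Implicit Types (a b c d : C) (M : 'M[C]_2).

Lemma mx2E M : M = mx2 (M 0 0) (M 0 1) (M 1 0) (M 1 1).
Proof.
apply/matrixP => i j; rewrite !mxE.
by case: i => [[|[|i]]] Hi; case: j => [[|[|j]]] Hj //=;
  congr (M _ _); apply: val_inj.
Qed.

Lemma mx2_add a b c d (a' b' c' d' : C) :
  mx2 a b c d + mx2 a' b' c' d' = mx2 (a + a') (b + b') (c + c') (d + d').
Proof.
apply/matrixP => i j; rewrite !mxE.
by case: i => [[|[|i]]] Hi; case: j => [[|[|j]]] Hj.
Qed.

Lemma mx2_opp a b c d : - mx2 a b c d = mx2 (- a) (- b) (- c) (- d).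
Proof.
apply/matrixP => i j; rewrite !mxE.
by case: i => [[|[|i]]] Hi; case: j => [[|[|j]]] Hj.
Qed.

Lemma mx2_scalar a : a%:M = mx2 a 0 0 a.
Proof.
apply/matrixP => i j; rewrite !mxE.
by case: i => [[|[|i]]] Hi; case: j => [[|[|j]]] Hj.
Qed.

Lemma mx2_mul a b c d (a' b' c' d' : C) :
  mx2 a b c d *m mx2 a' b' c' d' =
  mx2 (a * a' + b * c') (a * b' + b * d') (c * a' + d * c') (c * b' + d * d').
Proof.
apply/matrixP => i j; rewrite !mxE !big_ord_recl big_ord0 !mxE /=.
by case: i => [[|[|i]]] Hi; case: j => [[|[|j]]] Hj //=; rewrite addr0.
Qed.

Lemma ctrmx_mx2 a b c d : ctrmx (mx2 a b c d) = mx2 a^* c^* b^* d^*.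
Proof.
apply/matrixP => i j; rewrite !mxE.
by case: i => [[|[|i]]] Hi; case: j => [[|[|j]]] Hj.
Qed.

Lemma mxtrace_mx2 a b c d : \tr (mx2 a b c d) = a + d.
Proof. by rewrite /mxtrace !big_ord_recl big_ord0 !mxE /= addr0. Qed.

Lemma det_mx2 a b c d : \det (mx2 a b c d) = a * d - b * c.
Proof.
rewrite (expand_det_row _ 0) !big_ord_recl big_ord0 /cofactor !det_mx11 !mxE /=.
by rewrite expr0 expr1 addr0; ring.
Qed.

Lemma psdmx_mx2 a b c d : psdmx (mx2 a b c d) -> [/\ c = b^*, 0 <= a & 0 <= d].
Proof.
move=> H.
pose form x y := x^* * (a * x + b * y) + y^* * (c * x + d * y).
have form_ge0 x y : 0 <= form x y.
  have := H (\col_i if i == 0 then x else y).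
  rewrite !mxE !big_ord_recl big_ord0 !mxE /= !big_ord_recl !big_ord0 !mxE /=.
  rewrite !addr0 (_ : _ + _ = form x y) //.
  by rewrite /form; ring.
have form_real x y : (form x y)^* = form x y by apply/geC0_conj.
have form10 : form 1 0 = a by rewrite /form conjC1 conjC0; ring.
have form01 : form 0 1 = d by rewrite /form conjC1 conjC0; ring.
have form11 : form 1 1 = a + d + (b + c) by rewrite /form conjC1; ring.
have form1i : form 1 'i = a + d + 'i * (b - c) - (1 + 'i ^+ 2) * d.
  by rewrite /form conjC1 conjCi; ring.
have a0 : 0 <= a by rewrite -form10.
have d0 : 0 <= d by rewrite -form01.
split=> //.
(* Reality of the form at (1, 1) and (1, i) says that b + c and i (b - c)
   are real, which forces c = b^*. *)
have /(_ 1 1) := form_real.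
rewrite form11 !rmorphD /= (geC0_conj a0) (geC0_conj d0) => /addrI Ebc.
have /(_ 1 'i) := form_real.
rewrite form1i sqrCi addrN mul0r !subr0 !rmorphD !rmorphM rmorphB /=.
rewrite (geC0_conj a0) (geC0_conj d0) conjCi => /addrI Ebc'.
have : (c^* - b) *+ 2 = b^* + c^* - (b + c)
    - 'i * (- 'i * (b^* - c^*) - 'i * (b - c))
    - (1 + 'i ^+ 2) * (b^* - c^* + (b - c)).
  by ring.
rewrite Ebc Ebc' !subrr sqrCi addrN mul0r mulr0 !subr0 => /eqP.
by rewrite mulrn_eq0 /= subr_eq0 => /eqP <-; rewrite conjCK.
Qed.

Lemma in_S_mx2 M : in_S M ->
  [/\ M = mx2 (M 0 0) (M 0 1) (M 0 1)^* (1 - M 0 0), 0 < M 0 0 < 1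
    & `|M 0 1| ^+ 2 < M 0 0 * (1 - M 0 0)].
Proof.
case=> psdM _ trM /andP[detM _].
rewrite [M]mx2E in psdM; have [E10 t0 d0] := psdmx_mx2 psdM.
have E11 : M 1 1 = 1 - M 0 0.
  by rewrite -trM [M in \tr M]mx2E mxtrace_mx2 addrC addKr.
have EM : M = mx2 (M 0 0) (M 0 1) (M 0 1)^* (1 - M 0 0).
  by rewrite {1}[M]mx2E E10 E11.
rewrite E11 in d0; rewrite EM det_mx2 -normCK subr_gt0 in detM.
have tt : 0 < M 0 0 * (1 - M 0 0) := le_lt_trans (exprn_ge0 2 (normr_ge0 _)) detM.
split => //; apply/andP; split; last rewrite -subr_gt0.
- by rewrite lt0r t0 andbT; apply: contraTneq tt => ->; rewrite mul0r ltxx.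
- by rewrite lt0r d0 andbT; apply: contraTneq tt => ->; rewrite mulr0 ltxx.
Qed.

Lemma in_S_congr (u M : 'M[C]_2) :
  is_unitary2 u -> in_S M -> in_S (ctrmx u *m M *m u).
Proof.
move=> Hu [psdM psd1M trM detM]; split.
- exact: psdmx_congr.
- by rewrite -(unitary_congr1 Hu) -unitary_congrB; apply: psdmx_congr.
- by rewrite mxtrace_mulC mulmxA unitaryC // mul1mx.
- by rewrite !det_mulmx mulrC mulrA -det_mulmx unitaryC // det1 mul1r.
Qed.

Lemma abs_compatible_mx2 (t s al : C) : 0 < t < 1 -> s^* = s ->
  `|al| ^+ 2 < t * (1 - t) ->
  abs_compatible (mx2 t al al^* (1 - t)) (mx2 s (- al) (- al)^* (1 - s)) <->
  s = `|al| ^+ 2 / t \/ s = 1 - `|al| ^+ 2 / (1 - t).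
Proof.
move=> /andP[t0 t1] hs lt_al; have ht : t^* = t := geC0_conj (ltW t0).
rewrite (abs_compatible_scalar (x := (t - s) ^+ 2 + `|al| ^+ 2 *+ 4)
                               (y := (t + s - 1) ^+ 2)).
- by apply: scalar_root_condition; rewrite ?subr_gt0 ?exprn_ge0 // ltW.
- rewrite normCK mx2_opp mx2_add ctrmx_mx2 mx2_mul mx2_scalar.
  by rewrite !(rmorphB, rmorphN, rmorph1) /= ht hs conjCK; congr mx2; ring.
- rewrite !mx2_scalar !mx2_opp !mx2_add ctrmx_mx2 mx2_mul.
  by rewrite !(rmorphB, rmorphD, rmorph1, rmorph0) /= ht hs; congr mx2; ring.
Qed.

End TwoByTwo.

Theorem theorem3p5 (C : numClosedFieldType) (a b : 'M[C]_2) :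
  in_S a -> in_S b ->
  (abs_compatible a b <->
   exists (u : 'M[C]_2) (t s alpha beta : C),
     [/\ is_unitary2 u,
         ctrmx u *m a *m u = mx2 t alpha (Num.conj alpha) (1 - t),
         ctrmx u *m b *m u = mx2 s beta (Num.conj beta) (1 - s),
         [/\ beta = - alpha, alpha != 0, 0 < s < 1, 0 < t < 1
            & `|alpha| ^+ 2 < t * (1 - t)] &
         s = `|alpha| ^+ 2 / t \/ s = 1 - `|alpha| ^+ 2 / (1 - t)]).
Proof.
move=> Sa Sb; split; last first.
  case=> u [t [s [al [be [Hu Ea Eb [Ebe _ /andP[s0 _] t01 lt_al] rel]]]]].
  rewrite -(abs_compatible_unitary a b Hu) Ea Eb Ebe abs_compatible_mx2 //.
  exact/geC0_conj/ltW.
move=> ab; have [u Hu trig] := Schur_congr (a + b).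
have := in_S_congr Hu Sa; set A := ctrmx u *m a *m u.
move=> /in_S_mx2[EA t01 lt_al].
have := in_S_congr Hu Sb; set B := ctrmx u *m b *m u.
move=> /in_S_mx2[EB s01 _].
have Ebe : B 0 1 = - A 0 1.
  move/is_trig_mxP/(_ 0 1 isT): trig.
  by rewrite mulmxDr mulmxDl mxE addrC => /eqP; rewrite addr_eq0 => /eqP.
rewrite Ebe in EB.
have rel : B 0 0 = `|A 0 1| ^+ 2 / A 0 0 \/
            B 0 0 = 1 - `|A 0 1| ^+ 2 / (1 - A 0 0).
  case/andP: s01 => s0 _.
  rewrite -(abs_compatible_mx2 t01 (geC0_conj (ltW s0)) lt_al) -EA -EB.
  exact/abs_compatible_unitary.
exists u, (A 0 0), (B 0 0), (A 0 1), (- A 0 1); split => //; split => //.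
apply: contraTneq s01 => al0.
by case: rel => ->; rewrite al0 normr0 expr2 mul0r mul0r ?subr0 ltxx ?andbF.
Qed.
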